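(* If $P$ is a finite poset, then the interval monoid $\mathcal{M}(P)$ embeds into a finitely generated free monoid.
   Context: For a poset $P$, the interval monoid $\mathcal{M}(P)$ is the monoid presented by generators $[x,y]$ for $x\le y$ in $P$ and relations $[x,x]=1$ ($x\in P$) and $[x,z]=[x,y][y,z]$ whenever $x\le y\le z$. *)

From HB Require Import structures.
From mathcomp Require Import all_boot all_order.
Set Implicit Arguments. Unset Strict Implicit. Unset Printing Implicit Defensive.
Import Order.Theory.
Local Open Scope order_scope.

(* Generators [x,y] of the interval monoid: pairs x <= y in P. *)
Definition igen (d : Order.disp_t) (P : finPOrderType d) : Type :=
  {p : P * P | p.1 <= p.2}.

Inductive irel (d : Order.disp_t) (P : finPOrderType d) :
    seq (igen P) -> seq (igen P) -> Prop :=
  | irel_id (x : P) (hxx : x <= x) :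
      irel [:: exist _ (x, x) hxx] [::]
  | irel_comp (x y z : P) (hxy : x <= y) (hyz : y <= z) (hxz : x <= z) :
      irel [:: exist _ (x, z) hxz] [:: exist _ (x, y) hxy; exist _ (y, z) hyz].

(* The monoid congruence on words generated by the relations;
   M(P) is the quotient of the free monoid seq (igen P) by it. *)
Inductive icong (d : Order.disp_t) (P : finPOrderType d) :
    seq (igen P) -> seq (igen P) -> Prop :=
  | icong_rel u v : irel u v -> icong u v
  | icong_refl u : icong u u
  | icong_sym u v : icong u v -> icong v u
  | icong_trans u v w : icong u v -> icong v w -> icong u w
  | icong_ctx a b u v : icong u v -> icong (a ++ u ++ b) (a ++ v ++ b).

(* A monoid map M(P) -> A^* (A^* = seq A, the free monoid on A) is given by
   images of the generators; phi respects the relations iff it induces a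
   well-defined homomorphism, and the induced map is injective iff words with
   equal image are congruent.  Both are captured by the equivalence below. *)
Definition interval_monoid_embeds_via (d : Order.disp_t) (P : finPOrderType d)
    (A : Type) (phi : igen P -> seq A) : Prop :=
  forall u v : seq (igen P),
    icong u v <-> flatten (map phi u) = flatten (map phi v).

From HB Require Import structures.
From mathcomp Require Import all_boot all_order.
From mathcomp Require Import zify.
Set Implicit Arguments. Unset Strict Implicit. Unset Printing Implicit Defensive.
Import Order.Theory.

(* Choose an injective, strictly monotone [code : P -> nat] and send [x,y] to
   the word of unit steps [code x, code x + 1, ..., code y - 1].  The relations
   of M(P) hold because consecutive intervals concatenate.  Conversely, every
   word is congruent to a normal form without trivial generators and without
   two adjacent composable generators; the image of a normal form splits into
   maximal runs of consecutive integers, one per generator, so normal forms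
   with equal images coincide. *)

Section IntervalMonoid.

Variables (d : Order.disp_t) (P : finPOrderType d).

Definition lo (g : igen P) : P := (val g).1.
Definition hi (g : igen P) : P := (val g).2.

Lemma lo_le_hi (g : igen P) : (lo g <= hi g)%O.
Proof. exact: valP g. Qed.

Lemma igen_eq (g k : igen P) : lo g = lo k -> hi g = hi k -> g = k.
Proof.
move=> lo_eq hi_eq; apply: val_inj.
by rewrite [val g]surjective_pairing [val k]surjective_pairing; congr pair.
Qed.

(* The size of the down-set is strictly monotone; the rank in [enum P] breaks
   ties, making the code injective. *)
Definition code (x : P) : nat := #|[set w : P | (w <= x)%O]| * #|P| + enum_rank x.

Lemma code_lt (x y : P) : (x < y)%O -> code x < code y.
Proof.
move=> lt_xy.
have down_proper : [set w : P | (w <= x)%O] \proper [set w : P | (w <= y)%O].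
  apply/properP; split.
    by apply/subsetP => w; rewrite !inE => /le_trans; apply; apply: ltW.
  by exists y; rewrite !inE ?lexx ?(lt_geF lt_xy).
have := proper_card down_proper; have := ltn_ord (enum_rank x).
rewrite /code; move: (nat_of_ord (enum_rank x)) (nat_of_ord (enum_rank y)).
move: #|[set w | (w <= x)%O]| #|[set w | (w <= y)%O]| #|P| => a b n r s.
nia.
Qed.

Lemma code_le (x y : P) : (x <= y)%O -> code x <= code y.
Proof. by rewrite le_eqVlt => /predU1P [-> // | /code_lt /ltnW]. Qed.

Lemma code_inj : injective code.
Proof.
move=> x y /(congr1 (modn^~ #|P|)).
rewrite /code !modnMDl !modn_small ?ltn_ord // => /val_inj.
exact: enum_rank_inj.
Qed.

Lemma code_bound (x : P) : code x < #|P|.+1 * #|P|.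
Proof.
have := max_card [set w : P | (w <= x)%O]; have := ltn_ord (enum_rank x).
rewrite /code; move: (nat_of_ord (enum_rank x)).
move: #|[set w | (w <= x)%O]| #|P| => a n r.
nia.
Qed.

Definition steps (g : igen P) : seq nat :=
  iota (code (lo g)) (code (hi g) - code (lo g)).

Lemma steps_bound (g : igen P) k : k \in steps g -> k < #|P|.+1 * #|P|.
Proof.
rewrite mem_iota subnKC ?code_le ?lo_le_hi // => /andP [_ k_lt].
exact: ltn_trans k_lt (code_bound _).
Qed.

Lemma steps_icong (u v : seq (igen P)) :
  icong u v -> flatten (map steps u) = flatten (map steps v).
Proof.
elim=> {u v} [u v [x hxx | x y z hxy hyz hxz] | // | // | | a b u v _ e].
- by rewrite /= /steps subnn.
- rewrite /= /steps /lo /hi /= !cats0.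
  have [le_xy le_yz] := (code_le hxy, code_le hyz).
  have -> : code z - code x = (code y - code x) + (code z - code y) by lia.
  by rewrite iotaD; congr (_ ++ iota _ _); lia.
- by move=> u v w _ -> _ ->.
- by rewrite !map_cat !flatten_cat e.
Qed.

Definition normal (w : seq (igen P)) : bool :=
  all (fun g => lo g != hi g) w && sorted (fun g g' => hi g != lo g') w.

Lemma normal_consE g (w : seq (igen P)) :
  normal (g :: w) =
  [&& lo g != hi g, if w is g' :: _ then hi g != lo g' else true & normal w].
Proof.
rewrite /normal /=; case: w => [|g' w] /=; first by rewrite !andbT.
by case: (hi g != lo g'); rewrite /= ?andbF -?andbA.
Qed.

(* [[lo g, hi g']], meaningful when [hi g = lo g']; [insubd] falls back to [g]. *)
Definition glue (g g' : igen P) : igen P := insubd g (lo g, hi g').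

Lemma glueK (g g' : igen P) : hi g = lo g' -> val (glue g g') = (lo g, hi g').
Proof.
move=> e; rewrite insubdK //=.
by apply: le_trans (lo_le_hi g) _; rewrite e lo_le_hi.
Qed.

Definition normal_cons (g : igen P) (w : seq (igen P)) : seq (igen P) :=
  if lo g == hi g then w else
  if w is g' :: w' then (if hi g == lo g' then glue g g' :: w' else g :: w)
  else [:: g].

Definition normalize (u : seq (igen P)) : seq (igen P) := foldr normal_cons [::] u.

Lemma icong_normal_cons g (w : seq (igen P)) : icong (g :: w) (normal_cons g w).
Proof.
rewrite /normal_cons; case: g => [[x y] hxy]; rewrite /lo /hi /=.
case: eqP => [exy | _].
  by subst y; exact: (icong_ctx [::] w (icong_rel (irel_id hxy))).
case: w => [|[[y' z] hyz] w'] /=; first exact: icong_refl.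
case: eqP => [e_y | _]; last exact: icong_refl.
subst y'.
have hxz := le_trans hxy hyz.
have -> : glue (exist _ (x, y) hxy) (exist _ (y, z) hyz) = exist _ (x, z) hxz.
  exact/val_inj/glueK.
exact/icong_sym/(icong_ctx [::] w' (icong_rel (irel_comp hxy hyz hxz))).
Qed.

Lemma icong_normalize (u : seq (igen P)) : icong u (normalize u).
Proof.
elim: u => [|g u IH] /=; first exact: icong_refl.
apply: icong_trans (icong_normal_cons g _).
by have := icong_ctx [:: g] [::] IH; rewrite /= !cats0.
Qed.

Lemma normal_cons_normal g (w : seq (igen P)) : normal w -> normal (normal_cons g w).
Proof.
rewrite /normal_cons; case: eqP => // /eqP ntg.
case: w => [|g' w']; first by rewrite normal_consE ntg.
rewrite normal_consE => /and3P [ntg' hd_w' nw'].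
case: ifP => [/eqP e | /negbT ne]; first last.
  by rewrite normal_consE ntg ne normal_consE ntg' hd_w' nw'.
have [nt_glue hi_glue] : lo (glue g g') != hi (glue g g') /\ hi (glue g g') = hi g'.
  rewrite /lo /hi glueK //=; split=> //; apply: contra ntg => /eqP lo_eq.
  by rewrite eq_le lo_le_hi lo_eq e lo_le_hi.
by rewrite normal_consE nt_glue hi_glue hd_w' nw'.
Qed.

Lemma normal_normalize (u : seq (igen P)) : normal (normalize u).
Proof. by elim: u => //= g u; apply: normal_cons_normal. Qed.

Fixpoint run (a : nat) (w : seq nat) : nat :=
  if w is b :: w' then (if b == a then (run a.+1 w').+1 else 0) else 0.

Lemma run_iota a n r : run a (iota a n ++ r) = n + run (a + n) r.
Proof. by elim: n a => [|n IH] a /=; rewrite ?addn0 // eqxx IH addSnnS. Qed.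

Lemma code_lt_nontrivial (g : igen P) : lo g != hi g -> code (lo g) < code (hi g).
Proof. by move=> ntg; apply: code_lt; rewrite lt_neqAle ntg lo_le_hi. Qed.

Lemma steps_cat_head (g : igen P) r :
  lo g != hi g -> exists t, steps g ++ r = code (lo g) :: t.
Proof.
move/code_lt_nontrivial; rewrite /steps -subn_gt0.
by case: (_ - _) => // n _; eexists.
Qed.

Lemma run_steps g r :
  run (code (lo g)) (steps g ++ r) = code (hi g) - code (lo g) + run (code (hi g)) r.
Proof. by rewrite run_iota subnKC // code_le ?lo_le_hi. Qed.

(* In a normal form the next generator starts at a point other than [hi g], so
   the run of consecutive steps contributed by [g] stops at [code (hi g)]. *)
Lemma run_normal_tail g (u : seq (igen P)) :
  normal (g :: u) -> run (code (hi g)) (flatten (map steps u)) = 0.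
Proof.
rewrite normal_consE; case: u => [|g' u] //= /and3P [_ ne].
rewrite normal_consE => /and3P [ntg' _ _].
have [t ->] := steps_cat_head (flatten (map steps u)) ntg'.
by rewrite /=; case: eqP => // /code_inj e; rewrite e eqxx in ne.
Qed.

Lemma normal_steps_inj (u v : seq (igen P)) :
  normal u -> normal v -> flatten (map steps u) = flatten (map steps v) -> u = v.
Proof.
elim: u v => [|g u IH] [|k v] //.
- rewrite normal_consE => _ /and3P [ntk _ _] /=.
  by have [t ->] := steps_cat_head (flatten (map steps v)) ntk.
- rewrite normal_consE => /and3P [ntg _ _] _ /=.
  by have [t ->] := steps_cat_head (flatten (map steps u)) ntg.
move=> nu nv /= e.
move: (nu) (nv); rewrite !normal_consE => /and3P [ntg _ nu'] /and3P [ntk _ nv'].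
have lo_eq : code (lo g) = code (lo k).
  have [t1 e1] := steps_cat_head (flatten (map steps u)) ntg.
  have [t2 e2] := steps_cat_head (flatten (map steps v)) ntk.
  by move: e; rewrite e1 e2 => -[].
have hi_eq : code (hi g) = code (hi k).
  have := congr1 (run (code (lo g))) e; rewrite {2}lo_eq !run_steps.
  rewrite (run_normal_tail nu) (run_normal_tail nv) !addn0 => len_eq.
  by rewrite -(subnK (code_le (lo_le_hi g))) -(subnK (code_le (lo_le_hi k))) len_eq lo_eq.
have gk : g = k by apply: igen_eq; apply: code_inj.
subst k; congr (_ :: _); apply: IH => //.
by have := congr1 (drop (size (steps g))) e; rewrite !drop_size_cat.
Qed.

Lemma steps_embeds : interval_monoid_embeds_via steps.
Proof.
move=> u v; split; first exact: steps_icong.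
move=> e; apply: icong_trans (icong_normalize u) _.
apply: icong_sym; apply: icong_trans (icong_normalize v) _.
suff -> : normalize v = normalize u by exact: icong_refl.
apply: normal_steps_inj; rewrite ?normal_normalize //.
by rewrite -(steps_icong (icong_normalize u)) -(steps_icong (icong_normalize v)).
Qed.

Lemma embeds_via_map_in (A B : Type) (S : {pred A}) (f : A -> B) (phi : igen P -> seq A) :
  {in S &, injective f} -> (forall g, all (fun a => a \in S) (phi g)) ->
  interval_monoid_embeds_via phi -> interval_monoid_embeds_via (fun g => map f (phi g)).
Proof.
move=> f_inj phiS phi_emb u v.
have map_flat w : flatten (map (fun g => map f (phi g)) w) = map f (flatten (map phi w)).
  by rewrite map_flatten -map_comp.
have flatS w : all (fun a => a \in S) (flatten (map phi w)).
  by elim: w => //= g w IH; rewrite all_cat phiS.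
rewrite !map_flat phi_emb; split=> [-> // |].
exact: (inj_in_map f_inj (flatS u) (flatS v)).
Qed.

End IntervalMonoid.

Theorem proposition8p2 (d : Order.disp_t) (P : finPOrderType d) :
  exists (A : finType) (phi : igen P -> seq A), interval_monoid_embeds_via phi.
Proof.
set N := #|P|.+1 * #|P|.
exists 'I_N.+1, (fun g => map inord (steps g)).
apply: (embeds_via_map_in (S := fun k => k <= N)) (@steps_embeds d P).
- by move=> i j /inordK ei /inordK ej /(congr1 val) /=; rewrite ei ej.
- by move=> g; apply/allP => k /steps_bound /ltnW.
Qed.
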